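(* Let $w:\mathbb R^d\times\mathbb R^d\to\mathbb R$ satisfy $|w(y,x)-w(y',x')|\le L_w(\|x-x'\|+\|y-y'\|)$ for some $L_w>0$ and all $x,x',y,y'$, and suppose there exist $x_0,y_0\in\mathbb R^d$ with $\sup_x|w(y_0,x)|<\infty$ and $\sup_y|w(y,x_0)|<\infty$. Let $\mu,\rho$ be probability measures on $\mathbb R^d$, with $\mathcal E_\beta:=\int e^{\beta\|x\|}\rho(dx)<\infty$ for some $\beta>0$, and $\mu$ supported in the closed ball $B(0,r)$ for some $r>0$. Then for any $\beta'<\beta$ there exists a constant $C=C(w,\beta,\beta')$ such that $$\sup_{\|y\|\le r}\Big|\|w_y\|^2_{L^2(\mu)}-\|w_y\|^2_{L^2(\rho)}\Big|\le C(1+r)W_1(\mu,\rho)+C\mathcal E_\beta e^{-\beta' r}.$$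
   Context: $w_y(x)=w(y,x)$; $\|h\|_{L^2(\nu)}^2=\int|h|^2d\nu$; $W_1$ is the order-1 Wasserstein distance on $\mathbb R^d$ with respect to $\|x-y\|$. *)

From HB Require Import structures.
From mathcomp Require Import all_boot all_order all_algebra.
From mathcomp Require Import all_classical all_reals all_analysis.
Set Implicit Arguments. Unset Strict Implicit. Unset Printing Implicit Defensive.
Import Order.TTheory GRing.Theory Num.Theory.
Import numFieldNormedType.Exports.
Local Open Scope classical_set_scope.
Local Open Scope ring_scope.

(* R^d as row vectors, equipped with its Borel sigma-algebra (generated by the
   open sets of the standard product topology on 'rV[R]_d). *)
Definition Rd (R : realType) (d : nat) :=
  g_sigma_algebraType (@open 'rV[R]_d).

Definition enorm (R : realType) (d : nat) (x : 'rV[R]_d) : R :=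
  Num.sqrt (\sum_(i < d) x ord0 i ^+ 2).

Definition coupling (R : realType) (d : nat)
  (mu nu : probability (Rd R d) R) (pi : probability (Rd R d * Rd R d)%type R) : Prop :=
  (forall A : set (Rd R d), measurable A -> pi (A `*` setT) = mu A) /\
  (forall A : set (Rd R d), measurable A -> pi (setT `*` A) = nu A).

Definition W1 (R : realType) (d : nat) (mu nu : probability (Rd R d) R) : \bar R :=
  ereal_inf [set (\int[pi]_z (enorm ((z.1 : 'rV[R]_d) - (z.2 : 'rV[R]_d)))%:E)%E
            | pi in [set pi | coupling mu nu pi]].

Definition L2sq (R : realType) (d : nat) (mu : probability (Rd R d) R)
  (h : 'rV[R]_d -> R) : \bar R :=
  (\int[mu]_x (h x ^+ 2)%:E)%E.

Definition expmoment (R : realType) (d : nat) (rho : probability (Rd R d) R) (beta : R) : \bar R :=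
  (\int[rho]_x (expR (beta * enorm (x : 'rV[R]_d)))%:E)%E.

From HB Require Import structures.
From mathcomp Require Import all_boot all_order all_algebra.
From mathcomp Require Import all_classical all_reals all_analysis.
From mathcomp Require Import measurable_realfun ring lra.
Import Order.TTheory GRing.Theory Num.Theory.
Import numFieldNormedType.Exports.
Set Implicit Arguments.
Unset Strict Implicit.
Unset Printing Implicit Defensive.
Local Open Scope classical_set_scope.
Local Open Scope ring_scope.

(* Let f := w_y^2.  For every coupling pi of mu and rho,
   |int f dmu - int f drho| <= int |f x - f x'| dpi(x, x').
   Lipschitz continuity of w gives |w(y, x)| <= |w(0, 0)| + Lw (|x| + |y|), so for
   |x|, |y| <= r (which holds mu-a.e.)
     |f x - f x'| <= Lw |x - x'| (2 |w(0, 0)| + 3 Lw r + Lw |x'|).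
   If |x'| <= r this is O((1 + r) |x - x'|).  If |x'| > r then |x - x'| <= 2 |x'|, and the
   excess |x'|^2 is at most (2 / g^2) e^{g |x'|} <= (2 / g^2) e^{beta |x'|} e^{-beta' r}
   with g = beta - max(beta', 0).  Integrating against pi and taking the infimum over
   couplings gives the bound. *)

Section enorm.
Variables (R : realType) (d : nat).
Implicit Types x v : 'rV[R]_d.

Lemma enorm_ge0 v : 0 <= enorm v.
Proof. exact: sqrtr_ge0. Qed.

Lemma enorm0 : enorm (0 : 'rV[R]_d) = 0.
Proof. by rewrite /enorm big1 ?sqrtr0 // => i _; rewrite mxE expr0n. Qed.

Lemma enorm_sqr v : enorm v ^+ 2 = \sum_(i < d) v ord0 i ^+ 2.
Proof. by rewrite /enorm sqr_sqrtr // sumr_ge0 // => i _; exact: sqr_ge0. Qed.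

Lemma enorm_le_mx_norm v : enorm v <= Num.sqrt d%:R * `|v|.
Proof.
rewrite -(ger0_norm (normr_ge0 v)) -sqrtr_sqr -sqrtrM ?ler0n //.
rewrite /enorm ler_sqrt; last by rewrite mulr_ge0 // sqr_ge0.
apply: (@le_trans _ _ (\sum_(i < d) `|v| ^+ 2)); last first.
  by rewrite sumr_const card_ord mulr_natl.
apply: ler_sum => i _.
rewrite -[leLHS]ger0_norm ?sqr_ge0 // normrX lerXn2r ?nnegrE //.
by rewrite [leRHS]/Num.Def.normr /= mx_normrE (le_bigmax _ _ (ord0, i)).
Qed.

Lemma enorm_sub_le_double x x' : enorm x <= enorm x' -> enorm (x - x') <= 2 * enorm x'.
Proof.
move=> le_xx'; rewrite -ler_sqr ?nnegrE ?mulr_ge0 ?enorm_ge0 //.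
have parallelogram : enorm (x - x') ^+ 2 <= 2 * enorm x ^+ 2 + 2 * enorm x' ^+ 2.
  rewrite !enorm_sqr !mulr_sumr -big_split /=; apply: ler_sum => i _.
  by rewrite !mxE; have := sqr_ge0 (x ord0 i + x' ord0 i); nra.
have := ler_pM (enorm_ge0 x) (enorm_ge0 x) le_xx' le_xx'.
have := enorm_ge0 x; nra.
Qed.

Lemma enorm_lipschitz_continuous (f : 'rV[R]_d -> R) (K : R) : 0 <= K ->
  (forall x x', `|f x - f x'| <= K * enorm (x - x')) -> continuous f.
Proof.
move=> K0 lipf x; apply/(@cvgrPdist_lt _ _ _ (nbhs x) (nbhs_filter x)) => e e0.
set c := K * Num.sqrt d%:R + 1.
have c0 : 0 < c by rewrite ltr_wpDl // mulr_ge0 // sqrtr_ge0.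
apply/nbhs_ballP; exists (e / c); first by rewrite /= divr_gt0.
move=> z; rewrite mx_norm_ball /ball_ /= => xz_small.
apply: (le_lt_trans (lipf _ _)).
apply: (le_lt_trans (ler_wpM2l K0 (enorm_le_mx_norm _))).
rewrite mulrA; apply: (@le_lt_trans _ _ (c * `|x - z|)).
  by apply: ler_wpM2r => //; rewrite lerDl.
by rewrite -ltr_pdivlMl // mulrC.
Qed.

End enorm.

Lemma continuous_measurable_Rd (R : realType) (d : nat) (f : 'rV[R]_d -> R) :
  continuous f -> measurable_fun (setT : set (Rd R d)) (f : Rd R d -> R).
Proof.
move=> /continuousP cf; apply: (measurability _ (RGenOpens.measurableE R)).
move=> _ [_ [a [b ->] <-]]; rewrite setTI.
by apply: sub_sigma_algebra; apply: cf; exact: interval_open.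
Qed.

Lemma measurable_enorm_comp (R : realType) (d : nat) d' (T : measurableType d')
    (g : T -> 'rV[R]_d) :
  (forall i, measurable_fun setT (fun t => g t ord0 i)) ->
  measurable_fun setT (fun t => enorm (g t)).
Proof.
move=> mg; apply: (@measurableT_comp _ _ _ _ _ _ (@Num.sqrt R)).
  exact: continuous_measurable_fun (@sqrt_continuous R).
by apply: measurable_sum => i; exact: measurable_funX.
Qed.

Lemma measurable_enorm (R : realType) (d : nat) :
  measurable_fun (setT : set (Rd R d)) (fun x : Rd R d => enorm (x : 'rV[R]_d)).
Proof.
apply: (@measurable_enorm_comp R d _ (Rd R d) id) => i.
exact: continuous_measurable_Rd (@coord_continuous _ _ _ _ _).
Qed.

Lemma measurable_enorm_gt (R : realType) (d : nat) (r : R) :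
  measurable [set x : Rd R d | r < enorm (x : 'rV[R]_d)].
Proof.
rewrite -[X in measurable X]setTI -preimage_itvoy.
exact: measurable_enorm measurableT _ (measurable_itv _).
Qed.

Lemma measurable_expR_enorm (R : realType) (d : nat) (b : R) :
  measurable_fun (setT : set (Rd R d)) (fun x : Rd R d => expR (b * enorm (x : 'rV[R]_d))).
Proof.
apply: (@measurableT_comp _ _ _ _ _ _ expR); first exact: measurable_expR.
by apply: measurable_funM; [exact: measurable_cst | exact: measurable_enorm].
Qed.

Lemma measurable_enorm_sub (R : realType) (d : nat) :
  measurable_fun (setT : set (Rd R d * Rd R d)%type)
    (fun z : Rd R d * Rd R d => enorm ((z.1 : 'rV[R]_d) - z.2)).
Proof.
apply: measurable_enorm_comp => i.
have mcoord : measurable_fun (setT : set (Rd R d)) (fun x : Rd R d => (x : 'rV[R]_d) ord0 i).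
  exact: continuous_measurable_Rd (@coord_continuous _ _ _ _ _).
rewrite (_ : (fun z => _) = fun z : Rd R d * Rd R d =>
    (z.1 : 'rV[R]_d) ord0 i - (z.2 : 'rV[R]_d) ord0 i); last first.
  by apply/funext => z; rewrite !mxE.
by apply: measurable_funB; apply: measurableT_comp mcoord _.
Qed.

Lemma sqr_le_of_norm_le (R : realDomainType) (x u : R) : `|x| <= u -> x ^+ 2 <= u ^+ 2.
Proof. by move=> x_le; rewrite -real_normK ?num_real // lerXn2r ?nnegrE // (le_trans _ x_le). Qed.

Section scalar_bounds.
Variable R : realType.

Lemma sqr_le_expR (g s : R) : 0 < g -> 0 <= s -> s ^+ 2 <= 2 / g ^+ 2 * expR (g * s).
Proof.
move=> g0 s0.
have := @expR_ge1Dxn R (g * s) 1 (mulr_ge0 (ltW g0) s0).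
rewrite (_ : (1.+1)`!%:R = 2 :> R) // => exp_ge.
have -> : s ^+ 2 = 2 / g ^+ 2 * ((g * s) ^+ 2 / 2) by field; rewrite gt_eqF.
apply: ler_wpM2l; first by rewrite divr_ge0 // sqr_ge0.
by apply: le_trans exp_ge; rewrite lerDr.
Qed.

Lemma expR_le_tail (b b' r s : R) : 0 <= r <= s ->
  expR ((b - Num.max b' 0) * s) <= expR (b * s) * expR (- b' * r).
Proof.
move=> /andP[r0 rs]; rewrite -expRD ler_expR mulrBl lerD2l mulNr lerN2.
have s0 := le_trans r0 rs.
have [b'0|b'0] := leP b' 0.
  by rewrite mul0r; apply: mulr_le0_ge0.
by rewrite ler_pM2l.
Qed.

Lemma mul_le_tail (e s r T : R) : 0 <= e -> 0 <= r -> 0 <= T ->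
  (r < s -> e <= 2 * s /\ s ^+ 2 <= T) -> e * s <= r * e + 2 * T.
Proof.
move=> e0 r0 T0 tail; have [sr|rs] := leP s r; first nra.
have [es sT] := tail rs; nra.
Qed.

End scalar_bounds.

Section integrals.
Local Open Scope ereal_scope.
Context (R : realType) d1 d2 (T : measurableType d1) (U : measurableType d2).

Lemma ge0_integral_marginal (pi : {measure set T -> \bar R})
    (mu : {measure set U -> \bar R}) (phi : T -> U) (h : U -> \bar R) :
  measurable_fun setT phi -> (forall A, measurable A -> pi (phi @^-1` A) = mu A) ->
  measurable_fun setT h -> (forall u, 0 <= h u) ->
  \int[pi]_t h (phi t) = \int[mu]_u h u.
Proof.
move=> mphi marg mh h0.
have := ge0_integral_pushforward mphi pi measurableT mh (fun u _ => h0 u).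
rewrite preimage_setT => <-.
by apply: eq_measure_integral => A mA _; exact: marg.
Qed.

Lemma ge0_lty_integrable (mu : {measure set T -> \bar R}) (f : T -> R) :
  measurable_fun setT f -> (forall x, (0 <= f x)%R) ->
  \int[mu]_x (f x)%:E < +oo -> mu.-integrable setT (EFin \o f).
Proof.
move=> mf f0 fin; apply/integrableP; split; first exact/measurable_EFinP.
by rewrite (eq_integral (fun x => (f x)%:E)) // => x _; rewrite /= ger0_norm.
Qed.

Lemma integral_le_ae_bound (mu : probability T R) (f : T -> R) (N : set T) (M : R) :
  measurable N -> mu N = 0 -> measurable_fun setT f -> (forall x, (0 <= f x)%R) ->
  (0 <= M)%R -> (forall x, ~ N x -> (f x <= M)%R) -> \int[mu]_x (f x)%:E <= M%:E.
Proof.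
move=> mN muN0 mf f0 M0 f_le.
rewrite -[leRHS]mule1 -(probability_setT mu) -integral_cst //.
apply: ae_ge0_le_integral => //.
- by move=> x _; rewrite lee_fin.
- exact/measurable_EFinP.
exists N; split => // x /= not_le; apply: contra_notP not_le => Nx _.
by rewrite lee_fin f_le.
Qed.

Lemma integral_le_affine_bound (mu : probability T R) (f g : T -> R) (A B : R) :
  measurable_fun setT f -> measurable_fun setT g ->
  (forall x, (0 <= f x)%R) -> (forall x, (0 <= g x)%R) -> (0 <= A)%R -> (0 <= B)%R ->
  (forall x, (f x <= A + B * g x)%R) ->
  \int[mu]_x (f x)%:E <= A%:E + B%:E * \int[mu]_x (g x)%:E.
Proof.
move=> mf mg f0 g0 A0 B0 f_le.
have mgE : measurable_fun setT (EFin \o g) by exact/measurable_EFinP.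
apply: (@le_trans _ _ (\int[mu]_x (A%:E + B%:E * (g x)%:E))).
  apply: ge0_le_integral => //.
  - by move=> x _; rewrite lee_fin f0.
  - exact/measurable_EFinP.
  - by apply: emeasurable_funD => //; apply: emeasurable_funM.
  by move=> x _; rewrite -EFinM -EFinD lee_fin f_le.
rewrite ge0_integralD //; last 2 first.
- by move=> x _; rewrite mule_ge0 ?lee_fin.
- exact: emeasurable_funM.
rewrite integral_cst // [X in A%:E * X](_ : _ = 1) ?mule1; last exact: probability_setT.
by rewrite ge0_integralZl // => x _; rewrite lee_fin.
Qed.

Lemma ge0_integralDZl (mu : {measure set T -> \bar R}) (f g : T -> R) (a b : R) :
  measurable_fun setT f -> measurable_fun setT g ->
  (forall x, (0 <= f x)%R) -> (forall x, (0 <= g x)%R) -> (0 <= a)%R -> (0 <= b)%R ->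
  \int[mu]_x (a * f x + b * g x)%:E
    = a%:E * \int[mu]_x (f x)%:E + b%:E * \int[mu]_x (g x)%:E.
Proof.
move=> mf mg f0 g0 a0 b0.
have mfE : measurable_fun setT (EFin \o f) by exact/measurable_EFinP.
have mgE : measurable_fun setT (EFin \o g) by exact/measurable_EFinP.
under eq_integral do rewrite EFinD !EFinM.
rewrite ge0_integralD //; last 4 first.
- by move=> x _; rewrite mule_ge0 ?lee_fin.
- exact: emeasurable_funM.
- by move=> x _; rewrite mule_ge0 ?lee_fin.
- exact: emeasurable_funM.
by rewrite !ge0_integralZl // => x _; rewrite lee_fin.
Qed.

End integrals.

Section coupling.
Local Open Scope ereal_scope.
Variables (R : realType) (d : nat) (mu rho : probability (Rd R d) R).
Variable pi : probability (Rd R d * Rd R d)%type R.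
Hypothesis pi_coupling : coupling mu rho pi.

Lemma ge0_integral_coupling_fst (h : Rd R d -> \bar R) :
  measurable_fun setT h -> (forall x, 0 <= h x) -> \int[pi]_z h z.1 = \int[mu]_x h x.
Proof.
apply: ge0_integral_marginal measurable_fst _ => A mA.
by rewrite -setXT; exact: pi_coupling.1.
Qed.

Lemma ge0_integral_coupling_snd (h : Rd R d -> \bar R) :
  measurable_fun setT h -> (forall x, 0 <= h x) -> \int[pi]_z h z.2 = \int[rho]_x h x.
Proof.
apply: ge0_integral_marginal measurable_snd _ => A mA.
by rewrite -setTX; exact: pi_coupling.2.
Qed.

Lemma abse_integral_sub_le_coupling (f : Rd R d -> R) :
  measurable_fun setT f -> (forall x, (0 <= f x)%R) ->
  \int[mu]_x (f x)%:E < +oo -> \int[rho]_x (f x)%:E < +oo ->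
  `|\int[mu]_x (f x)%:E - \int[rho]_x (f x)%:E| <= \int[pi]_z `|f z.1 - f z.2|%:E.
Proof.
move=> mf f0 fmu_lty frho_lty.
have mfE : measurable_fun setT (EFin \o f) by exact/measurable_EFinP.
have f0E x : 0 <= (f x)%:E by rewrite lee_fin.
have mf1 : measurable_fun setT (fun z : Rd R d * Rd R d => f z.1).
  exact: measurableT_comp mf measurable_fst.
have mf2 : measurable_fun setT (fun z : Rd R d * Rd R d => f z.2).
  exact: measurableT_comp mf measurable_snd.
rewrite -(ge0_integral_coupling_fst mfE f0E) -(ge0_integral_coupling_snd mfE f0E).
rewrite -(ge0_integral_coupling_fst mfE f0E) in fmu_lty.
rewrite -(ge0_integral_coupling_snd mfE f0E) in frho_lty.
rewrite -integralB_EFin ?ge0_lty_integrable //.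
rewrite [leRHS](eq_integral (fun z => `|(f z.1)%:E - (f z.2)%:E|)) => [|z _]; last first.
  by rewrite -EFinB abse_EFin.
apply: le_abse_integral => //.
by apply/measurable_EFinP; exact: measurable_funB.
Qed.

End coupling.

Section transport.
Local Open Scope ereal_scope.
Variables (R : realType) (d : nat) (mu rho : probability (Rd R d) R).
Variables (f g : Rd R d -> R) (N : set (Rd R d)) (a q : R).
Hypotheses (mN : measurable N) (muN0 : mu N = 0).
Hypotheses (mf : measurable_fun setT f) (mg : measurable_fun setT g).
Hypotheses (f0 : forall x, (0 <= f x)%R) (g0 : forall x, (0 <= g x)%R).
Hypotheses (fmu_lty : \int[mu]_x (f x)%:E < +oo) (frho_lty : \int[rho]_x (f x)%:E < +oo).
Hypothesis grho_lty : \int[rho]_x (g x)%:E < +oo.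
Hypotheses (a0 : (0 < a)%R) (q0 : (0 <= q)%R).
Hypothesis f_sub_le : forall x x' : Rd R d, ~ N x ->
  (`|f x - f x'| <= a * enorm ((x : 'rV[R]_d) - x') + q * g x')%R.

Lemma abse_integral_sub_le_transport_cost pi : coupling mu rho pi ->
  `|\int[mu]_x (f x)%:E - \int[rho]_x (f x)%:E|
    <= a%:E * \int[pi]_z (enorm ((z.1 : 'rV[R]_d) - z.2))%:E
       + q%:E * \int[rho]_x (g x)%:E.
Proof.
move=> pi_coupling.
apply: le_trans (abse_integral_sub_le_coupling pi_coupling mf f0 fmu_lty frho_lty) _.
have mg2 : measurable_fun setT (fun z : Rd R d * Rd R d => g z.2).
  exact: measurableT_comp mg measurable_snd.
have mgE : measurable_fun setT (EFin \o g) by exact/measurable_EFinP.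
have g0E x : 0 <= (g x)%:E by rewrite lee_fin.
rewrite -(ge0_integral_coupling_snd pi_coupling mgE g0E).
rewrite -ge0_integralDZl //; last 3 first.
- exact: measurable_enorm_sub.
- by move=> z; exact: enorm_ge0.
- exact: ltW.
apply: ae_ge0_le_integral => //.
- apply/measurable_EFinP/measurableT_comp => //.
  by apply: measurable_funB; apply: measurableT_comp mf _.
- by move=> z _; rewrite lee_fin addr_ge0 // mulr_ge0 ?enorm_ge0 // ltW.
- apply/measurable_EFinP/measurable_funD; apply: measurable_funM => //.
  exact: measurable_enorm_sub.
exists (N `*` setT); split.
- exact: measurableX.
- by rewrite -muN0; exact: pi_coupling.1.
move=> [x x'] /= not_le; split => //; apply: contra_notP not_le => Nx _.
by rewrite lee_fin; exact: f_sub_le.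
Qed.

Lemma abse_integral_sub_le_W1 :
  `|\int[mu]_x (f x)%:E - \int[rho]_x (f x)%:E|
    <= a%:E * W1 mu rho + q%:E * \int[rho]_x (g x)%:E.
Proof.
have tail_fin : q%:E * \int[rho]_x (g x)%:E \is a fin_num.
  rewrite fin_numM // ge0_fin_numE // integral_ge0 // => x _.
  by rewrite lee_fin.
rewrite -leeBlDr // /W1 -ereal_inf_pZl //.
apply: le_ereal_inf_tmp => _ [_ [pi pi_coupling <-] <-].
by rewrite leeBlDr //; exact: abse_integral_sub_le_transport_cost.
Qed.

End transport.

Definition transport_const (R : realType) (K Lw gap : R) :=
  2 * Lw * K + 4 * Lw ^+ 2 + 2 * Lw ^+ 2 * (2 / gap ^+ 2).

Lemma transport_const_gt0 (R : realType) (K Lw gap : R) :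
  0 <= K -> 0 < Lw -> 0 < transport_const K Lw gap.
Proof.
move=> K0 Lw0; have := mulr_ge0 (ltW Lw0) K0.
have : 0 <= Lw ^+ 2 * (2 / gap ^+ 2) by rewrite mulr_ge0 ?sqr_ge0 // divr_ge0 ?sqr_ge0.
rewrite /transport_const; nra.
Qed.

Section lipschitz_kernel.
Variables (R : realType) (d : nat) (w : 'rV[R]_d -> 'rV[R]_d -> R) (Lw : R).
Hypothesis Lw_ge0 : 0 <= Lw.
Hypothesis w_lip : forall x x' y y' : 'rV[R]_d,
  `|w y x - w y' x'| <= Lw * (enorm (x - x') + enorm (y - y')).

Lemma w_lipschitz_snd y x x' : `|w y x - w y x'| <= Lw * enorm (x - x').
Proof. by have := w_lip x x' y y; rewrite subrr enorm0 addr0. Qed.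

Lemma w_growth y x : `|w y x| <= `|w 0 0| + Lw * (enorm x + enorm y).
Proof.
have := w_lip x 0 y 0; rewrite !subr0 => lip.
have := ler_normD (w y x - w 0 0) (w 0 0); rewrite subrK => tri.
by apply: le_trans tri _; rewrite addrC lerD2l.
Qed.

Variables (y : 'rV[R]_d) (r : R).
Hypothesis y_le : enorm y <= r.

Lemma sqr_w_le_ball x : enorm x <= r -> w y x ^+ 2 <= (`|w 0 0| + 2 * Lw * r) ^+ 2.
Proof.
move=> x_le; apply/sqr_le_of_norm_le/(le_trans (w_growth y x)); rewrite lerD2l.
by have := ler_wpM2l Lw_ge0 x_le; have := ler_wpM2l Lw_ge0 y_le; lra.
Qed.

Lemma sqr_w_le_expR (b : R) x : 0 < b ->
  w y x ^+ 2 <= 2 * (`|w 0 0| + Lw * r) ^+ 2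
                + 2 * Lw ^+ 2 * (2 / b ^+ 2) * expR (b * enorm x).
Proof.
move=> b0; set u := `|w 0 0| + Lw * r; set v := Lw * enorm x.
have u0 : 0 <= u by rewrite addr_ge0 // mulr_ge0 // (le_trans (enorm_ge0 y)).
have w_le : `|w y x| <= u + v.
  apply: (le_trans (w_growth y x)); rewrite /u /v.
  by have := ler_wpM2l Lw_ge0 y_le; lra.
have v_sqr : v ^+ 2 <= Lw ^+ 2 * (2 / b ^+ 2 * expR (b * enorm x)).
  by rewrite exprMn ler_wpM2l ?sqr_ge0 // sqr_le_expR ?enorm_ge0.
have := sqr_le_of_norm_le w_le.
have := sqr_ge0 (u - v); nra.
Qed.

Lemma sqr_w_sub_le (b b' : R) x x' : 0 < b -> b' < b -> enorm x <= r ->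
  `|w y x ^+ 2 - w y x' ^+ 2|
    <= transport_const `|w 0 0| Lw (b - Num.max b' 0) * (1 + r) * enorm (x - x')
       + transport_const `|w 0 0| Lw (b - Num.max b' 0) * expR (- b' * r)
         * expR (b * enorm x').
Proof.
move=> b0 b'b x_le.
set K := `|w 0 0|; set e := enorm (x - x'); set s := enorm x'.
set gap := b - Num.max b' 0; set c := 2 / gap ^+ 2.
set E1 := expR (b * s); set E2 := expR (- b' * r).
have r0 : 0 <= r := le_trans (enorm_ge0 y) y_le.
have [K0 e0 s0] : [/\ 0 <= K, 0 <= e & 0 <= s] by rewrite normr_ge0 !enorm_ge0.
have gap0 : 0 < gap by rewrite subr_gt0 gt_max b'b b0.
have sum_le : `|w y x + w y x'| <= 2 * K + 3 * Lw * r + Lw * s.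
  apply: (le_trans (ler_normD _ _)).
  have := w_growth y x; have := w_growth y x'; rewrite -/K -/s.
  have := ler_wpM2l Lw_ge0 x_le; have := ler_wpM2l Lw_ge0 y_le; lra.
have [c0 E10 E20] : [/\ 0 <= c, 0 <= E1 & 0 <= E2] by rewrite divr_ge0 ?sqr_ge0 ?expR_ge0.
have es_le : e * s <= r * e + 2 * (c * (E1 * E2)).
  apply: mul_le_tail => // [|r_lt_s]; first exact: mulr_ge0 c0 (mulr_ge0 E10 E20).
  split; first by apply: enorm_sub_le_double; rewrite (le_trans x_le) // ltW.
  apply: (le_trans (sqr_le_expR gap0 s0)); rewrite ler_wpM2l ?divr_ge0 ?sqr_ge0 //.
  by apply: expR_le_tail; rewrite r0 ltW.
have prod_le : `|w y x ^+ 2 - w y x' ^+ 2| <= Lw * e * (2 * K + 3 * Lw * r + Lw * s).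
  by rewrite subr_sqr normrM ler_pM ?normr_ge0 ?w_lipschitz_snd.
apply: (le_trans prod_le); rewrite /transport_const -/K -/gap -/c.
have := ler_wpM2l (sqr_ge0 Lw) es_le.
have LwK0 : 0 <= Lw * K := mulr_ge0 Lw_ge0 K0.
have Lw20 : 0 <= Lw ^+ 2 := sqr_ge0 Lw.
have := mulr_ge0 (mulr_ge0 LwK0 r0) e0.
have := mulr_ge0 Lw20 e0.
have := mulr_ge0 (mulr_ge0 (mulr_ge0 Lw20 c0) (addr_ge0 ler01 r0)) e0.
have := mulr_ge0 (mulr_ge0 LwK0 E20) E10.
have := mulr_ge0 (mulr_ge0 Lw20 E20) E10.
nra.
Qed.

Lemma measurable_sqr_w : measurable_fun (setT : set (Rd R d)) (fun x : Rd R d => w y x ^+ 2).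
Proof.
apply: measurable_funX; apply: continuous_measurable_Rd.
exact: enorm_lipschitz_continuous Lw_ge0 (w_lipschitz_snd y).
Qed.

Lemma integral_sqr_w_lty_ball (mu : probability (Rd R d) R) :
  mu [set x : Rd R d | r < enorm (x : 'rV[R]_d)] = 0%E ->
  (\int[mu]_x (w y x ^+ 2)%:E < +oo)%E.
Proof.
move=> mu_out; apply: le_lt_trans (ltry ((`|w 0 0| + 2 * Lw * r) ^+ 2)).
apply: integral_le_ae_bound (@measurable_enorm_gt R d r) mu_out measurable_sqr_w _ _ _.
- by move=> x; exact: sqr_ge0.
- exact: sqr_ge0.
by move=> x /negP; rewrite -leNgt; exact: sqr_w_le_ball.
Qed.

Lemma integral_sqr_w_lty_expmoment (rho : probability (Rd R d) R) (b : R) :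
  0 < b -> (expmoment rho b < +oo)%E -> (\int[rho]_x (w y x ^+ 2)%:E < +oo)%E.
Proof.
move=> b0 rho_lty.
have A0 : 0 <= 2 * (`|w 0 0| + Lw * r) ^+ 2 by rewrite mulr_ge0 ?sqr_ge0.
have B0 : 0 <= 2 * Lw ^+ 2 * (2 / b ^+ 2).
  exact: mulr_ge0 (mulr_ge0 (ler0n _ 2) (sqr_ge0 _)) (divr_ge0 (ler0n _ 2) (sqr_ge0 _)).
have := integral_le_affine_bound rho measurable_sqr_w (@measurable_expR_enorm R d b)
  (fun x => sqr_ge0 _) (fun x => expR_ge0 _) A0 B0 (fun x => sqr_w_le_expR x b0).
by move/le_lt_trans; apply; rewrite lte_add_pinfty ?ltry // lte_mul_pinfty.
Qed.

End lipschitz_kernel.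

Theorem lemma1 (R : realType) (d : nat) (w : 'rV[R]_d -> 'rV[R]_d -> R) (Lw : R)
  (x0 y0 : 'rV[R]_d) (beta beta' : R) :
  0 < Lw ->
  (forall x x' y y' : 'rV[R]_d,
      `|w y x - w y' x'| <= Lw * (enorm (x - x') + enorm (y - y'))) ->
  (exists M : R, forall x, `|w y0 x| <= M) ->
  (exists M : R, forall y, `|w y x0| <= M) ->
  0 < beta -> beta' < beta ->
  exists C : R,
    forall (mu rho : probability (Rd R d) R) (r : R),
      0 < r ->
      (expmoment rho beta < +oo)%E ->
      mu [set x : Rd R d | r < enorm (x : 'rV[R]_d)] = 0%E ->
      forall y : 'rV[R]_d, enorm y <= r ->
        (`| L2sq mu (w y) - L2sq rho (w y) |
           <= (C * (1 + r))%:E * W1 mu rho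
              + C%:E * expmoment rho beta * (expR (- beta' * r))%:E)%E.
Proof.
move=> Lw0 w_lip _ _ beta0 beta'_lt.
set C := transport_const `|w 0 0| Lw (beta - Num.max beta' 0).
have C0 : 0 < C by apply: transport_const_gt0.
exists C => mu rho r r0 rho_lty mu_out y y_le.
have Lw_ge0 := ltW Lw0.
have a_gt0 : 0 < C * (1 + r) by rewrite mulr_gt0 // ltr_wpDr // ltW.
have q_ge0 : 0 <= C * expR (- beta' * r) by rewrite mulr_ge0 ?expR_ge0 // ltW.
rewrite muleAC -EFinM.
apply: (abse_integral_sub_le_W1 (@measurable_enorm_gt R d r) mu_out
  (measurable_sqr_w Lw_ge0 w_lip y) (@measurable_expR_enorm R d beta)
  (fun x => sqr_ge0 _) (fun x => expR_ge0 _)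
  (integral_sqr_w_lty_ball Lw_ge0 w_lip y_le mu_out)
  (integral_sqr_w_lty_expmoment Lw_ge0 w_lip y_le beta0 rho_lty) rho_lty a_gt0 q_ge0).
move=> x x' /negP; rewrite -leNgt => x_le.
(* The goal carries order instances that are only convertible to those of the
   lemma, so the keyed matching of [exact:] fails. *)
exact (sqr_w_sub_le Lw_ge0 w_lip y_le x' beta0 beta'_lt x_le).
Qed.
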